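(* For a generalised numerical semigroup $S\subseteq\mathbb{N}^d$ with $\mathcal{H}(S)\neq\emptyset$, the following are equivalent: (i) $S$ is a Frobenius GNS, i.e. $F_\prec(S)$ is the same gap for every relaxed monomial order $\prec$; (ii) $\mathcal{H}(S)$ has a unique maximal element with respect to the natural partial order; (iii) $PF(S)$ has a unique maximal element with respect to the natural partial order.
   Context: $\mathbb{N}=\{0,1,2,\dots\}$. A generalised numerical semigroup (GNS) is a submonoid $S\subseteq\mathbb{N}^d$ whose complement $\mathcal{H}(S)=\mathbb{N}^d\setminus S$ (the gaps) is finite. Natural partial order: $x\le y$ iff $x^{(i)}\le y^{(i)}$ for all $i$. A relaxed monomial order is a total order $\prec$ on $\mathbb{N}^d$ with (i) $v\prec w\Rightarrow v\prec w+u$ for all $u\in\mathbb{N}^d$, (ii) $0\prec v$ for all $v\ne0$; $F_\prec(S)=\max_\prec\mathcal{H}(S)$. A gap $P$ is pseudo-Frobenius if $P+s\in S$ for every nonzero $s\in S$; $PF(S)$ is the set of pseudo-Frobenius gaps. *)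

From mathcomp Require Import all_boot.
Set Implicit Arguments. Unset Strict Implicit. Unset Printing Implicit Defensive.

Definition pt (d : nat) := {ffun 'I_d -> nat}.

Definition pt0 (d : nat) : pt d := [ffun _ => 0].
Definition ptadd (d : nat) (x y : pt d) : pt d := [ffun i => x i + y i].

Definition ptle (d : nat) (x y : pt d) : Prop := forall i, x i <= y i.

Definition is_GNS (d : nat) (S : pred (pt d)) : Prop :=
  S (pt0 d) /\
  (forall x y, S x -> S y -> S (ptadd x y)) /\
  (exists s : seq (pt d), forall x, ~~ S x -> x \in s).

Definition gap (d : nat) (S : pred (pt d)) (x : pt d) : Prop := ~~ S x.

Definition relaxed_monomial_order (d : nat) (lt : pt d -> pt d -> Prop) : Prop :=
  (forall x, ~ lt x x) /\
  (forall x y z, lt x y -> lt y z -> lt x z) /\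
  (forall x y, x <> y -> lt x y \/ lt y x) /\
  (forall v w u, lt v w -> lt v (ptadd w u)) /\
  (forall v, v <> pt0 d -> lt (pt0 d) v).

Definition is_frobenius_wrt (d : nat) (lt : pt d -> pt d -> Prop)
  (S : pred (pt d)) (F : pt d) : Prop :=
  gap S F /\ forall h, gap S h -> h <> F -> lt h F.

Definition Frobenius_GNS (d : nat) (S : pred (pt d)) : Prop :=
  exists F : pt d, forall lt, relaxed_monomial_order lt -> is_frobenius_wrt lt S F.

Definition pseudo_frobenius (d : nat) (S : pred (pt d)) (P : pt d) : Prop :=
  gap S P /\ forall s, S s -> s <> pt0 d -> S (ptadd P s).

Definition maximal_in (d : nat) (A : pt d -> Prop) (m : pt d) : Prop :=
  A m /\ forall x, A x -> ptle m x -> x = m.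

Definition unique_maximal (d : nat) (A : pt d -> Prop) : Prop :=
  exists m, maximal_in A m /\ forall m', maximal_in A m' -> m' = m.

(* The gap set is finite, so the total degree  psum x = Σ_i x_i  is bounded
   on it and every gap lies below a ≤-maximal gap.  Hence (ii) says that
   one gap m dominates all gaps.  Such an m is the ≺-largest gap for every
   relaxed monomial order, because h ≤ m means m = h + (m - h), and ≺ is
   compatible with translation; this gives (ii) ⇒ (i).  Conversely the
   lexicographic orders (with any coordinate put first) are relaxed
   monomial orders, and a gap that is lex-largest for all of them dominates
   every gap coordinatewise; this gives (i) ⇒ (ii).  Finally, a maximal gap
   m is pseudo-Frobenius (m + s is a gap above m for no s ≠ 0), and the
   maximal gaps are exactly the maximal pseudo-Frobenius gaps, which gives
   (ii) ⇔ (iii). *)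

From Stdlib Require Import Classical.
From mathcomp Require Import all_boot zify.

Set Implicit Arguments. Unset Strict Implicit. Unset Printing Implicit Defensive.

Lemma unique_maximal_ext (d : nat) (A B : pt d -> Prop) :
  (forall m, maximal_in A m <-> maximal_in B m) ->
  unique_maximal A <-> unique_maximal B.
Proof.
move=> AB; split=> -[m [Mm U]]; exists m; split.
- exact/AB.
- by move=> m' /AB /U.
- exact/AB.
- by move=> m' /AB /U.
Qed.

Section NaturalOrder.
Variable d : nat.
Implicit Types (x y h m : pt d) (A : pt d -> Prop).

Lemma ptle_anti x y : ptle x y -> ptle y x -> x = y.
Proof. by move=> xy yx; apply/ffunP => i; apply/eqP; rewrite eqn_leq xy yx. Qed.

Lemma ptle_trans x y m : ptle x y -> ptle y m -> ptle x m.
Proof. by move=> xy ym i; exact: leq_trans (xy i) (ym i). Qed.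

Lemma greatest_unique_maximal A m :
  A m -> (forall x, A x -> ptle x m) -> unique_maximal A.
Proof.
move=> Am greatest; exists m; split.
- by split=> // x Ax mx; exact: ptle_anti (greatest x Ax) mx.
- by move=> m' [Am' max']; apply: esym; exact: max' _ Am (greatest _ Am').
Qed.

Definition psum x : nat := \sum_i x i.

Lemma psum_lt x y : ptle x y -> x <> y -> psum x < psum y.
Proof.
move=> xy neq.
have [i xyi] : exists i, x i < y i.
  apply: NNPP => none; apply: neq; apply: ptle_anti => // j.
  by rewrite leqNgt; apply/negP => xyj; apply: none; exists j.
rewrite /psum (bigD1 i) //= [X in _ < X](bigD1 i) //= -addSn.
by rewrite leq_add //; apply: leq_sum => j _; exact: xy.
Qed.

(* In a set of bounded total degree every element lies below a maximal
   one (induction on the remaining room B - psum h). *)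
Lemma maximal_above A B : (forall x, A x -> psum x <= B) ->
  forall h, A h -> exists m, maximal_in A m /\ ptle h m.
Proof.
move=> bounded h Ah; move: {2}(B - psum h) (leqnn (B - psum h)) => n.
elim: n h Ah => [|n IH] h Ah room;
  case: (classic (exists x, A x /\ ptle h x /\ x <> h)) =>
    [[x [Ax [hx xh]]]|none]; try (exists h; split=> //; split=> // x Ax hx;
    by apply: NNPP => xh; apply: none; exists x).
- have := psum_lt hx (nesym xh); have := bounded x Ax; lia.
- have [|m [Mm xm]] := IH x Ax.
    have := psum_lt hx (nesym xh); have := bounded x Ax; lia.
  by exists m; split=> //; exact: ptle_trans hx xm.
Qed.

End NaturalOrder.

Section Lexicographic.
Variable d : nat.
Implicit Types (x y z u : pt d) (l : seq 'I_d).

Fixpoint lexl l x y : Prop :=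
  match l with
  | [::] => False
  | j :: l' => x j < y j \/ (x j = y j /\ lexl l' x y)
  end.

Lemma lex_irr l x : ~ lexl l x x.
Proof. by elim: l => [|j l IH] //= [|[_ /IH]]; rewrite ?ltnn. Qed.

Lemma lex_trans l x y z : lexl l x y -> lexl l y z -> lexl l x z.
Proof.
elim: l => [|j l IH] //= [xy|[exy xy]] [yz|[eyz yz]].
- by left; exact: ltn_trans xy yz.
- by left; rewrite -eyz.
- by left; rewrite exy.
- by right; split; [rewrite exy | exact: IH xy yz].
Qed.

Lemma lex_total l x y :
  lexl l x y \/ lexl l y x \/ (forall j, j \in l -> x j = y j).
Proof.
elim: l => [|j l IH] /=; first by right; right.
case: (ltngtP (x j) (y j)) => xyj; [by left; left | by right; left; left |].
case: IH => [xy|[yx|eq]]; [by left; right | by right; left; right |].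
by right; right => k; rewrite inE => /orP[/eqP-> | /eq].
Qed.

Lemma lex_add l x y u : lexl l x y -> lexl l x (ptadd y u).
Proof.
elim: l => [|j l IH] //= [xy|[exy xy]]; rewrite ffunE.
- by left; exact: leq_trans xy (leq_addr _ _).
- case: (posnP (u j)) => [u0|upos].
  + by right; rewrite u0 addn0; split=> //; exact: IH.
  + by left; rewrite exy -[X in X < _]addn0 ltn_add2l.
Qed.

Lemma lex_not_below_zero l x : ~ lexl l x (pt0 d).
Proof. by elim: l => [|j l IH] //= [|[_ /IH]]; rewrite ?ffunE. Qed.

Lemma lex_relaxed_monomial l :
  (forall j, j \in l) -> relaxed_monomial_order (lexl l).
Proof.
move=> full; split; [exact: lex_irr | split; [exact: lex_trans |]].
split; [| split; [exact: lex_add |]].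
- move=> x y neq; case: (lex_total l x y) => [|[|eq]]; auto.
  by case: neq; apply/ffunP => j; rewrite eq.
- move=> v nz; case: (lex_total l (pt0 d) v) => [// | [/lex_not_below_zero // | eq]].
  by case: nz; apply/ffunP => j; rewrite eq.
Qed.

End Lexicographic.

Section Gaps.
Variable d : nat.
Variable S : pred (pt d).
Hypothesis GNS_S : is_GNS S.
Implicit Types (h m F : pt d).

Lemma gaps_bounded : exists B, forall h, gap S h -> psum h <= B.
Proof.
have [_ [_ [s fin]]] := GNS_S.
by exists (\max_(x <- s) psum x) => h /fin hs; exact: leq_bigmax_seq.
Qed.

Lemma gap_below_maximal h : gap S h ->
  exists m, maximal_in (gap S) m /\ ptle h m.
Proof. by have [B bounded] := gaps_bounded; exact: maximal_above bounded h. Qed.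

Lemma unique_maximal_greatest m :
  unique_maximal (gap S) -> maximal_in (gap S) m -> forall h, gap S h -> ptle h m.
Proof.
move=> [m0 [_ U]] Mm h Hh; have [m' [Mm' hm']] := gap_below_maximal Hh.
by rewrite (U _ Mm) -(U _ Mm').
Qed.

(* A gap dominating every gap is F_≺(S) for every relaxed monomial order:
   h ≤ m gives m = h + (m - h), so h ≺ m unless m ≺ m. *)
Lemma greatest_gap_frobenius m :
  gap S m -> (forall h, gap S h -> ptle h m) -> Frobenius_GNS S.
Proof.
move=> Gm greatest; exists m => lt [irr [_ [total [transl _]]]].
split=> // h Hh hm; case: (total h m hm) => // mh; case: (irr m).
have split_m : m = ptadd h [ffun j => m j - h j].
  by apply/ffunP => j; rewrite !ffunE subnKC //; exact: greatest.
by rewrite {2}split_m; exact: transl.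
Qed.

(* A gap that is F_≺(S) for every lexicographic order dominates every gap:
   if h_i > F_i, the lexicographic order reading i first puts F below h. *)
Lemma frobenius_greatest F :
  (forall lt, relaxed_monomial_order lt -> is_frobenius_wrt lt S F) ->
  forall h, gap S h -> ptle h F.
Proof.
move=> frob h Hh i; rewrite leqNgt; apply/negP => Fh.
pose l := i :: enum 'I_d.
have [_ Fmax] := frob _ (@lex_relaxed_monomial d l
  (fun j => ltac:(by rewrite inE mem_enum orbT))).
have hF : h <> F by move=> eq; move: Fh; rewrite eq ltnn.
by apply: (lex_irr (lex_trans (Fmax h Hh hF) (_ : lexl l F h))); left.
Qed.

Lemma frobenius_gap F :
  (forall lt, relaxed_monomial_order lt -> is_frobenius_wrt lt S F) -> gap S F.
Proof.
by move=> frob; have [] := frob _ (@lex_relaxed_monomial d (enum 'I_d)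
  (fun j => ltac:(by rewrite mem_enum))).
Qed.

(* A maximal gap m is pseudo-Frobenius: m + s is a gap above m unless s = 0. *)
Lemma maximal_gap_pseudo_frobenius m :
  maximal_in (gap S) m -> pseudo_frobenius S m.
Proof.
move=> [Gm Mm]; split=> // s Ss nz.
apply: NNPP => notS; apply: nz; apply/ffunP => j.
have /ffunP/(_ j) := Mm (ptadd m s) (introN idP notS)
  (fun j => ltac:(by rewrite ffunE leq_addr)).
by rewrite !ffunE => /eqP; rewrite -{2}[m j]addn0 eqn_add2l => /eqP.
Qed.

Lemma maximal_gap_iff_pseudo_frobenius m :
  maximal_in (gap S) m <-> maximal_in (pseudo_frobenius S) m.
Proof.
split=> [Mm | [[Gm PFm] Mm]].
- split; first exact: maximal_gap_pseudo_frobenius.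
  by move=> x [Gx _]; exact: (proj2 Mm) x Gx.
- split=> // h Hh mh; have [m' [Mm' hm']] := gap_below_maximal Hh.
  have m'm : m' = m.
    by apply: Mm; [exact: maximal_gap_pseudo_frobenius | exact: ptle_trans hm'].
  by subst m'; exact: ptle_anti.
Qed.

End Gaps.

Theorem mainTheorem2 (d : nat) (S : pred (pt d)) :
  is_GNS S -> (exists h, gap S h) ->
  (Frobenius_GNS S <-> unique_maximal (gap S)) /\
  (unique_maximal (gap S) <-> unique_maximal (pseudo_frobenius S)).
Proof.
move=> GNS_S _; split; last first.
  exact/unique_maximal_ext/maximal_gap_iff_pseudo_frobenius.
split.
- move=> [F frob].
  exact: greatest_unique_maximal (frobenius_gap frob) (frobenius_greatest frob).
- move=> UM; have [m [Mm _]] := UM.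
  exact: greatest_gap_frobenius (proj1 Mm) (unique_maximal_greatest GNS_S UM Mm).
Qed.
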